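(* Let $R=(\mathbb{Z}_I,\oplus,\otimes)$ be an $I$-based ring and $S=(\mathbb{Z}_L,\oplus,\otimes)$ an $L$-based ring which is a based subring of $R$. Let $M=(\mathbb{Z}_J,\oplus,\otimes)$ be a based $R$-module with basis $J$. If $M$ is a torsion $R$-module, then the restriction $\mathrm{Res}^R_S(M)$ (i.e. $M$ viewed as an $S$-module) decomposes as a direct sum of torsion $S$-modules.
   Context: For a set $X$, $\mathbb{Z}_X$ is the free $\mathbb{Z}$-module with basis $X$. Let $(I,\mathbbm{1})$ be an involutive pointed set. A ring structure on $\mathbb{Z}_I$ is given by constants $N^i_{\alpha,i'}\ge0$ with $\alpha\otimes i'=\sum_iN^i_{\alpha,i'}i$; write $i\subset\alpha\otimes i'$ if $N^i_{\alpha,i'}\ne0$; it is $I$-based if $\overline{\alpha\otimes\alpha'}=\overline{\alpha'}\otimes\overline{\alpha}$ and $\mathbbm{1}\subset\overline{\alpha}\otimes\alpha'$ iff $\alpha=\alpha'$. A module structure on $\mathbb{Z}_J$ is given by constants $N^j_{\alpha,j'}\ge0$; it is $J$-based if $j\subset\alpha\otimes j'\iff j'\subset\overline{\alpha}\otimes j$; co-finite if $\{\alpha:j\subset\alpha\otimes j'\}$ is finite for all $j,j'$; connected if for all $j,j'$ some $\alpha$ has $j\subset\alpha\otimes j'$; torsion if co-finite and connected. $S$ is a based subring of $R$ if $L\subset I$ is closed under involution, contains $\mathbbm{1}$, and products of elements of $L$ only involve elements of $L$. *)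

From mathcomp Require Import all_boot.
Set Implicit Arguments. Unset Strict Implicit. Unset Printing Implicit Defensive.

(* Conventions:
   - The free Z-module Z_X has basis X; structure constants are natural numbers.
   - N a b c  = N^c_{a,b}, the coefficient of c in a (x) b   (a,b,c : I).
   - NM a j' j = N^j_{a,j'}, the coefficient of j in a (x) j' (a : I, j,j' : J).
   - "i subset x" means the corresponding structure constant is nonzero. *)

Definition finite_pred (T : eqType) (P : T -> Prop) : Prop :=
  exists s : seq T, forall x, P x -> x \in s.

Definition involutive_pointed (I : eqType) (one : I) (inv : I -> I) : Prop :=
  involutive inv /\ inv one = one.

Definition ring_constants (I : eqType) (one : I) (N : I -> I -> I -> nat) : Prop :=
  [/\ (forall a b, finite_pred (fun c => N a b c <> 0)),
      (forall a b c d (s : seq I), uniq s ->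
         (forall k, N a b k <> 0 \/ N b c k <> 0 -> k \in s) ->
         \sum_(k <- s) N a b k * N k c d = \sum_(k <- s) N b c k * N a k d),
      (forall a c, N one a c = (c == a) :> nat) &
      (forall a c, N a one c = (c == a) :> nat)].

(* I-based ring (the involution is extended Z-linearly to Z_I). *)
Definition is_based_ring (I : eqType) (one : I) (inv : I -> I)
    (N : I -> I -> I -> nat) : Prop :=
  [/\ involutive_pointed one inv,
      ring_constants one N,
      (* bar(a (x) b) = bar b (x) bar a *)
      (forall a b e, N a b (inv e) = N (inv b) (inv a) e) &
      (forall a a', N (inv a) a' one <> 0 <-> a = a')].

Definition is_based_subring (I : eqType) (one : I) (inv : I -> I)
    (N : I -> I -> I -> nat) (L : I -> Prop) : Prop :=
  [/\ L one,
      (forall a, L a -> L (inv a)) &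
      (forall a b c, L a -> L b -> N a b c <> 0 -> L c)].

Definition module_constants (I J : eqType) (one : I) (N : I -> I -> I -> nat)
    (NM : I -> J -> J -> nat) : Prop :=
  [/\ (forall a j', finite_pred (fun j => NM a j' j <> 0)),
      (forall a b j j'' (s : seq I) (t : seq J), uniq s -> uniq t ->
         (forall k, N a b k <> 0 -> k \in s) ->
         (forall m, NM b j m <> 0 -> m \in t) ->
         \sum_(k <- s) N a b k * NM k j j'' = \sum_(m <- t) NM b j m * NM a m j'') &
      (forall j j', NM one j j' = (j' == j) :> nat)].

Definition is_based_module (I J : eqType) (one : I) (inv : I -> I)
    (N : I -> I -> I -> nat) (NM : I -> J -> J -> nat) : Prop :=
  module_constants one N NM /\
  (forall a j j', NM a j' j <> 0 <-> NM (inv a) j j' <> 0).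

(* Co-finiteness / connectedness of the based module with basis B (a subset
   of J) over the based ring with basis A (a subset of I), with the
   restricted structure constants. *)
Definition is_cofinite (I J : eqType) (A : I -> Prop) (B : J -> Prop)
    (NM : I -> J -> J -> nat) : Prop :=
  forall j j', B j -> B j' -> finite_pred (fun a => A a /\ NM a j' j <> 0).

Definition is_connected (I J : eqType) (A : I -> Prop) (B : J -> Prop)
    (NM : I -> J -> J -> nat) : Prop :=
  forall j j', B j -> B j' -> exists a, A a /\ NM a j' j <> 0.

Definition is_torsion (I J : eqType) (A : I -> Prop) (B : J -> Prop)
    (NM : I -> J -> J -> nat) : Prop :=
  is_cofinite A B NM /\ is_connected A B NM.

From Stdlib Require Import RelationClasses PropExtensionality FunctionalExtensionality.
From mathcomp Require Import all_boot.

Set Implicit Arguments. Unset Strict Implicit.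

(* The blocks are the classes of the relation "j occurs in a (x) j' for some a
   in L". It is reflexive because the unit lies in L, symmetric because L is
   closed under the involution and M is based, and transitive because an
   occurrence in a (x) (b (x) j) is an occurrence in c (x) j for some c in
   a (x) b, which lies in L. Each class is then connected by construction, and
   co-finiteness over S is inherited from co-finiteness over R. *)

Definition linked (I J : Type) (L : I -> Prop) (NM : I -> J -> J -> nat)
    (j' j : J) : Prop :=
  exists a, L a /\ NM a j' j <> 0.

Lemma equiv_class_eq (T : Type) (R : T -> T -> Prop) :
  Equivalence R -> forall x y, R^~ x = R^~ y <-> R x y.
Proof.
move=> [Rrefl Rsym Rtrans] x y; split=> [Exy | Rxy].
  by have /= <- := equal_f Exy x.
apply: functional_extensionality => z; apply: propositional_extensionality.
by split=> Rz; [apply: Rtrans Rxy | apply: Rtrans (Rsym _ _ Rxy)].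
Qed.

Lemma is_cofinite_sub (I J : eqType) (A A' : I -> Prop) (B B' : J -> Prop)
    (NM : I -> J -> J -> nat) :
  (forall a, A' a -> A a) -> (forall j, B' j -> B j) ->
  is_cofinite A B NM -> is_cofinite A' B' NM.
Proof.
move=> sA sB cofin j j' /sB Bj /sB Bj'.
have [s Hs] := cofin j j' Bj Bj'.
by exists s => a [/sA Aa NMa]; apply: Hs.
Qed.

Section Support.

Variables (I J : eqType) (one : I) (N : I -> I -> I -> nat) (NM : I -> J -> J -> nat).
Hypothesis N_fin : forall a b, finite_pred (fun c => N a b c <> 0).
Hypothesis NM_module : module_constants one N NM.

(* Both sides of the associativity identity are sums of natural numbers,
   so one is nonzero iff some term of the other is. *)
Lemma NM_support_mul a b x y z :
  NM b x y <> 0 -> NM a y z <> 0 -> exists2 c, N a b c <> 0 & NM c x z <> 0.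
Proof.
case: NM_module => NM_fin NM_assoc _ NMbxy NMayz.
have [s sP] := N_fin a b; have [t tP] := NM_fin b x.
have assoc_abx : \sum_(c <- undup s) N a b c * NM c x z
               = \sum_(m <- undup t) NM b x m * NM a m z.
  apply: NM_assoc; rewrite ?undup_uniq // => ? ?; rewrite mem_undup.
    exact: sP.
  exact: tP.
have : \sum_(m <- undup t) NM b x m * NM a m z != 0.
  rewrite sum_nat_seq_neq0; apply/hasP; exists y; first by rewrite mem_undup; apply: tP.
  by rewrite /= muln_eq0 negb_or; apply/andP; split; apply/eqP.
rewrite -assoc_abx sum_nat_seq_neq0 => /hasP [c _].
by rewrite /= muln_eq0 negb_or => /andP [/eqP ? /eqP ?]; exists c.
Qed.

End Support.

Section Linked.

Variables (I J : eqType) (one : I) (inv : I -> I) (N : I -> I -> I -> nat).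
Variables (L : I -> Prop) (NM : I -> J -> J -> nat).
Hypothesis L_sub : is_based_subring one inv N L.

Lemma linked_refl : module_constants one N NM -> Reflexive (linked L NM).
Proof.
case: L_sub => L1 _ _ [_ _ NM1] j.
by exists one; rewrite NM1 eqxx.
Qed.

Lemma linked_sym : is_based_module one inv N NM -> Symmetric (linked L NM).
Proof.
case: L_sub => _ Linv _ [_ NM_based] j' j [a [La NMa]].
by exists (inv a); split; [apply: Linv | apply: (proj1 (NM_based _ _ _))].
Qed.

Lemma linked_trans :
  (forall a b, finite_pred (fun c => N a b c <> 0)) ->
  module_constants one N NM -> Transitive (linked L NM).
Proof.
case: L_sub => _ _ Lmul N_fin NM_module x y z [b [Lb NMb]] [a [La NMa]].
have [c Nc NMc] := NM_support_mul N_fin NM_module NMb NMa.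
by exists c; split => //; apply: Lmul Nc.
Qed.

Lemma linked_equiv :
  is_based_ring one inv N -> is_based_module one inv N NM ->
  Equivalence (linked L NM).
Proof.
move=> [_ [N_fin _ _ _] _ _] NM_based; have [NM_module _] := NM_based.
split; [exact: linked_refl | exact: linked_sym | exact: linked_trans].
Qed.

End Linked.

Theorem lemma3p2 (I J : eqType) (one : I) (inv : I -> I)
    (N : I -> I -> I -> nat) (L : I -> Prop) (NM : I -> J -> J -> nat) :
  is_based_ring one inv N ->
  is_based_subring one inv N L ->
  is_based_module one inv N NM ->
  is_torsion (fun _ => True) (fun _ => True) NM ->
  exists (K : Type) (blk : J -> K),
    (forall a j j', L a -> NM a j' j <> 0 -> blk j = blk j') /\
    (forall k : K, is_torsion L (fun j => blk j = k) NM).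
Proof.
move=> HR HS HM [cofin _].
have Lequiv := linked_equiv HS HR HM.
exists (J -> Prop), (fun j => linked L NM ^~ j); split.
  move=> a j j' La NMa; apply: (proj2 (equiv_class_eq Lequiv j j')).
  by symmetry; exists a.
move=> k; split; first exact: is_cofinite_sub cofin.
move=> j j' blk_j blk_j'; apply: (proj1 (equiv_class_eq Lequiv j' j)).
by rewrite blk_j blk_j'.
Qed.
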